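(* Let $L\in(\Sigma^4_{2,8})^\star$ and $F=\langle L,q(a,b,c)^4\rangle\in\mathbb{R}[a,b,c]_4$, and suppose that the set $\mathcal{V}(F)(\mathbb{R})\subset\mathbb{P}^2(\mathbb{R})$ of real zeros of $F$ is finite. Then $|\mathcal{V}(F)(\mathbb{R})|\le3$. Equivalently: every ternary quartic $F$ lying in $\partial\Sigma^2_{3,4}\cap U$ with only finitely many real projective zeros has at most $3$ real zeros.
   Context: Apolarity pairing on $\mathbb{R}[x,y]$: $\langle x^{\alpha_1}y^{\alpha_2},x^{\beta_1}y^{\beta_2}\rangle=\frac{\beta_1!\beta_2!}{\alpha_1!\alpha_2!}x^{\beta_1-\alpha_1}y^{\beta_2-\alpha_2}$ if $\alpha_i\le\beta_i$, and $0$ otherwise, extended bilinearly. $\Sigma^4_{2,8}\subset\mathbb{R}[x,y]_8$ is the cone of finite sums of fourth powers of real binary quadratic forms and $(\Sigma^4_{2,8})^\star=\{L\in\mathbb{R}[x,y]_8:\langle L,q^4\rangle\ge0\ \forall q\in\mathbb{R}[x,y]_2\}$. With variables $a,b,c$, $q(a,b,c)=ax^2+bxy+cy^2$ and $\langle L,q(a,b,c)^4\rangle\in\mathbb{R}[a,b,c]_4$ is computed in $x,y$ treating $a,b,c$ as scalars. $U\subset\mathbb{R}[a,b,c]_4$ is the $9$-dimensional subspace $\{\langle L,q(a,b,c)^4\rangle: L\in\mathbb{R}[x,y]_8\}$ (equivalently the apolar orthogonal complement of the degree-4 part of the ideal $(b^2-ac)$); $\Sigma^2_{3,4}$ is the cone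 of nonnegative (equivalently, sums of squares) ternary quartics, and $\partial\Sigma^2_{3,4}$ its boundary. Under $L\mapsto\langle L,q(a,b,c)^4\rangle$, $(\Sigma^4_{2,8})^\star$ corresponds to $\Sigma^2_{3,4}\cap U$. *)

From HB Require Import structures.
From mathcomp Require Import all_boot all_order all_algebra.
From mathcomp Require Import reals.
Set Implicit Arguments. Unset Strict Implicit. Unset Printing Implicit Defensive.
Import Order.TTheory GRing.Theory Num.Theory.
Local Open Scope ring_scope.

(* A real binary form of degree d in x,y is encoded by its coefficient
   function f : 'I_d.+1 -> R, where f i is the coefficient of x^i y^(d-i). *)

(* Apolarity pairing of two binary forms of the same degree d:
   <x^i y^(d-i), x^j y^(d-j)> = j!(d-j)!/(i!(d-i)!) * x^(j-i) y^((d-j)-(d-i))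
   if i <= j and d-i <= d-j, and 0 otherwise; since both have degree d the
   resulting monomial is the constant 1 when nonzero. *)
Definition apolar {R : realType} (d : nat) (f g : 'I_d.+1 -> R) : R :=
  \sum_(i < d.+1) \sum_(j < d.+1)
    f i * g j *
    (if (i <= j)%N && (d - i <= d - j)%N
     then ((j`! * (d - j)`!)%:R / (i`! * (d - i)`!)%:R) else 0).

(* Coefficients of q(a,b,c)^4 = (a x^2 + b x y + c y^2)^4, a binary octic:
   coefficient of x^i y^(8-i) is the coefficient of X^i of the
   dehomogenization (y = 1). *)
Definition qpow4 {R : realType} (a b c : R) : 'I_9 -> R :=
  fun i => ((a *: 'X^2 + b *: 'X + c%:P : {poly R}) ^+ 4)`_i.

Definition Fq {R : realType} (L : 'I_9 -> R) (a b c : R) : R :=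
  @apolar R 8 L (qpow4 a b c).

Definition in_dual_cone {R : realType} (L : 'I_9 -> R) : Prop :=
  forall a b c : R, 0 <= Fq L a b c.

Definition proj_eq {R : realType} (v w : R * R * R) : Prop :=
  exists t : R, t != 0 /\ v = (t * w.1.1, t * w.1.2, t * w.2).

Definition nonzero3 {R : realType} (v : R * R * R) : Prop :=
  v <> (0, 0, 0).

Definition real_zero {R : realType} (L : 'I_9 -> R) (v : R * R * R) : Prop :=
  nonzero3 v /\ Fq L v.1.1 v.1.2 v.2 = 0.

Definition zeros_covered_by {R : realType} (L : 'I_9 -> R) (s : seq (R * R * R)) : Prop :=
  forall v, real_zero L v -> exists2 w, w \in s & proj_eq v w.

(* Write F v = <L, q_v^4>, where q_v is the binary quadratic with coefficient vector v.
   F is a nonnegative quartic, so each real zero v is a critical point: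
   <L, q_v^3 q_w> = 0 for all w.  For independent zeros v, w this gives
   F (s v + t w) = 6 s^2 t^2 <L, q_v^2 q_w^2>, and the mixed term is positive, since
   otherwise F would vanish on a whole line.  Hence no three zeros are collinear, and four
   zeros can be rescaled to u1, u2, u3, u1 + u2 + u3 with det (u1, u2, u3) <> 0.  All
   moments <L, q_i q_j q_k q_l> of q_i = q_(u_i) are then expressed through the positive
   numbers A, B, C = <L, q_2^2 q_3^2>, <L, q_1^2 q_3^2>, <L, q_1^2 q_2^2>, and positivity of
   F forces 2 (AB + BC + CA) >= A^2 + B^2 + C^2.  The six products q_i q_j satisfy one
   linear relation, with coefficient matrix N of determinant 16 det (u1, u2, u3)^4.
   Pairing this relation with each q_k q_l gives linear equations for N whose solutions
   are all singular under the above inequalities: a contradiction. *)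

From HB Require Import structures.
From mathcomp Require Import all_boot all_order all_algebra.
From mathcomp Require Import reals ring lra zify.
From Stdlib Require Import Classical.
Set Implicit Arguments. Unset Strict Implicit. Unset Printing Implicit Defensive.
Import Order.TTheory GRing.Theory Num.Theory.
Local Open Scope ring_scope.

Section NonnegativePolynomials.
Variable R : realFieldType.

Lemma le0_of_le_small (x K : R) : (forall e, 0 < e -> e <= 1 -> x <= K * e) -> x <= 0.
Proof.
move=> small; rewrite leNgt; apply/negP => x_gt0.
have K_ge0 := normr_ge0 K.
pose e := x / (x + `|K| + 1).
have ex : e * (x + `|K| + 1) = x by rewrite /e mulfVK // gt_eqF //; lra.
have e_gt0 : 0 < e by rewrite divr_gt0 //; lra.
have e_le1 : e <= 1 by nra.
have := small e e_gt0 e_le1; have := ler_norm K; nra.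
Qed.

Lemma nonneg_quartic_lin_coef (b c d f : R) :
  (forall e, 0 <= b * e + c * e ^+ 2 + d * e ^+ 3 + f * e ^+ 4) -> b = 0.
Proof.
move=> nonneg; pose K := `|c| + `|d| + `|f|.
have small e : 0 < e -> e <= 1 -> b <= K * e /\ - b <= K * e.
  move=> e_gt0 e_le1.
  have le_abs g t : 0 <= t -> t <= e ^+ 2 -> g * t <= `|g| * e ^+ 2.
    by move=> t_ge0 te; apply: le_trans (ler_wpM2r t_ge0 (ler_norm g)) (ler_wpM2l _ te).
  have e3_ge0 : 0 <= e ^+ 3 by rewrite exprn_ge0 ?ltW.
  have e4_ge0 : 0 <= e ^+ 4 by rewrite exprn_ge0 ?ltW.
  have e3_le : e ^+ 3 <= e ^+ 2 by nra.
  have e4_le : e ^+ 4 <= e ^+ 2 by nra.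
  have hc := le_abs c _ (sqr_ge0 e) (lexx _).
  have hd := le_abs d _ e3_ge0 e3_le; have hd' := le_abs (- d) _ e3_ge0 e3_le.
  have hf := le_abs f _ e4_ge0 e4_le.
  rewrite normrN in hd'.
  have h1 : - b * e <= K * e ^+ 2 by have := nonneg e; rewrite /K; lra.
  have h2 : b * e <= K * e ^+ 2 by have := nonneg (- e); rewrite /K; lra.
  by clear -h1 h2 e_gt0; split; nra.
have := le0_of_le_small (fun e ep e1 => proj1 (small e ep e1)).
have := le0_of_le_small (fun e ep e1 => proj2 (small e ep e1)); lra.
Qed.

Lemma nonneg_quadratic_lead_ge0 (a b c : R) :
  (forall w, 0 <= a * w ^+ 2 + b * w + c) -> 0 <= a.
Proof.
move=> nonneg; rewrite -oppr_le0.
apply: (le0_of_le_small (K := `|b| + `|c|)) => e e_gt0 e_le1.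
have : 0 <= e ^+ 2 * (a * e^-1 ^+ 2 + b * e^-1 + c) by rewrite mulr_ge0 ?sqr_ge0.
have -> : e ^+ 2 * (a * e^-1 ^+ 2 + b * e^-1 + c) = a + b * e + c * e ^+ 2.
  by field; rewrite gt_eqF.
have hb := ler_wpM2r (ltW e_gt0) (ler_norm b).
have e2 : e ^+ 2 <= e by rewrite expr2 ger_pMl.
have hc := le_trans (ler_wpM2r (sqr_ge0 e) (ler_norm c)) (ler_wpM2l (normr_ge0 c) e2).
lra.
Qed.

End NonnegativePolynomials.

Section SymmetricDeterminant.
Variable R : idomainType.

Definition det_sym3 (m11 m22 m33 m12 m13 m23 : R) : R :=
  m11 * m22 * m33 + 2 * m12 * m13 * m23
  - m11 * m23 ^+ 2 - m22 * m13 ^+ 2 - m33 * m12 ^+ 2.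

Lemma det_sym3_kernel (m11 m22 m33 m12 m13 m23 x y z : R) :
  det_sym3 m11 m22 m33 m12 m13 m23 != 0 ->
  m11 * x + m12 * y + m13 * z = 0 ->
  m12 * x + m22 * y + m23 * z = 0 ->
  m13 * x + m23 * y + m33 * z = 0 -> [/\ x = 0, y = 0 & z = 0].
Proof.
move=> det_neq0 e1 e2 e3; pose d := det_sym3 m11 m22 m33 m12 m13 m23.
have dx : d * x = (m22 * m33 - m23 ^+ 2) * (m11 * x + m12 * y + m13 * z)
  + (m13 * m23 - m12 * m33) * (m12 * x + m22 * y + m23 * z)
  + (m12 * m23 - m13 * m22) * (m13 * x + m23 * y + m33 * z) by rewrite /d /det_sym3; ring.
have dy : d * y = (m13 * m23 - m12 * m33) * (m11 * x + m12 * y + m13 * z)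
  + (m11 * m33 - m13 ^+ 2) * (m12 * x + m22 * y + m23 * z)
  + (m12 * m13 - m11 * m23) * (m13 * x + m23 * y + m33 * z) by rewrite /d /det_sym3; ring.
have dz : d * z = (m12 * m23 - m13 * m22) * (m11 * x + m12 * y + m13 * z)
  + (m12 * m13 - m11 * m23) * (m12 * x + m22 * y + m23 * z)
  + (m11 * m22 - m12 ^+ 2) * (m13 * x + m23 * y + m33 * z) by rewrite /d /det_sym3; ring.
rewrite e1 e2 e3 !mulr0 !addr0 in dx dy dz.
by split; apply: (mulfI det_neq0); rewrite mulr0.
Qed.

End SymmetricDeterminant.

Section MomentSystem.
Variable R : realFieldType.

(* The pairings of a relation  n11 p1^2 + n22 p2^2 + n33 p3^2 + 2 (n12 p1 p2 + n13 p1 p3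
   + n23 p2 p3) = 0  with p1^2, p2^2, p3^2, p1 p2, p1 p3, p2 p3, once every moment has been
   expressed through A = <L, p2^2 p3^2>, B = <L, p1^2 p3^2>, C = <L, p1^2 p2^2>; here
   (p, q, r, x, y, z) = (n11, n22, n33, n12, n13, n23). *)
Definition moment_eqs (A B C p q r x y z : R) : Prop :=
  [/\ C * q + B * r + (A - B - C) * z = 0,
      C * p + A * r + (B - A - C) * y = 0 &
      B * p + A * q + (C - A - B) * x = 0] /\
  [/\ (C - A - B) * r + 4 * C * x + 2 * (A - B - C) * y + 2 * (B - A - C) * z = 0,
      (B - A - C) * q + 2 * (A - B - C) * x + 4 * B * y + 2 * (C - A - B) * z = 0 &
      (A - B - C) * p + 2 * (B - A - C) * x + 2 * (C - A - B) * y + 4 * A * z = 0].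

Lemma moment_eqs_perm12 A B C p q r x y z :
  moment_eqs A B C p q r x y z -> moment_eqs B A C q p r x z y.
Proof. by case=> -[e1 e2 e3] [e4 e5 e6]; split; split; lra. Qed.

Lemma moment_eqs_perm13 A B C p q r x y z :
  moment_eqs A B C p q r x y z -> moment_eqs C B A r q p z y x.
Proof. by case=> -[e1 e2 e3] [e4 e5 e6]; split; split; lra. Qed.

Lemma moment_eqs_degenerate B C p q r x y z : 0 < B -> 0 < C ->
  moment_eqs (B + C) B C p q r x y z -> [/\ q = 0, r = 0, x = z, y = z & p = 2 * z].
Proof.
move=> B_gt0 C_gt0 [[e1 e2 e3] [e4 e5 e6]].
have B_neq0 : B != 0 by rewrite gt_eqF.
have C_neq0 : C != 0 by rewrite gt_eqF.
have r0 : r = 0.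
  apply: (mulfI (_ : 3 * B * (B + C) != 0)); first by rewrite gt_eqF // !mulr_gt0 ?addr_gt0.
  move: (congr1 ( *%R B) e2) (congr1 ( *%R C) e3) (congr1 ( *%R B) e4).
  move: (congr1 ( *%R C) e5) (congr1 ( *%R (B + 2 * C)) e1); rewrite !mulr0; lra.
have q0 : q = 0 by apply: (mulfI C_neq0); rewrite mulr0; move: e1; rewrite r0; lra.
have xz : x = z.
  by apply: (mulfI (_ : 4 * C != 0)); [rewrite gt_eqF ?mulr_gt0 | move: e4; rewrite r0; lra].
have yz : y = z.
  by apply: (mulfI (_ : 4 * B != 0)); [rewrite gt_eqF ?mulr_gt0 | move: e5; rewrite q0; lra].
by split=> //; apply: (mulfI C_neq0); move: e2; rewrite r0 yz; lra.
Qed.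

Lemma moment_eqs_det_sym3 A B C p q r x y z :
  0 < A -> 0 < B -> 0 < C ->
  0 <= 2 * (A * B + B * C + C * A) - A ^+ 2 - B ^+ 2 - C ^+ 2 ->
  moment_eqs A B C p q r x y z -> det_sym3 p q r x y z = 0.
Proof.
move=> A_gt0 B_gt0 C_gt0 disc_ge0 eqs.
pose a := B + C - A; pose b := A + C - B; pose c := A + B - C.
have [a0|a_neq0] := eqVneq a 0.
  have /moment_eqs_degenerate[//|//|q0 r0 xz yz pz] : moment_eqs (B + C) B C p q r x y z.
    by rewrite (_ : B + C = A); last by move: a0; rewrite /a; lra.
  by rewrite /det_sym3 q0 r0 xz yz pz; ring.
have [b0|b_neq0] := eqVneq b 0.
  have /moment_eqs_degenerate[//|//|p0 r0 xy zy qy] : moment_eqs (A + C) A C q p r x z y.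
    by rewrite (_ : A + C = B); [exact: moment_eqs_perm12 | move: b0; rewrite /b; lra].
  by rewrite /det_sym3 p0 r0 xy zy qy; ring.
have [c0|c_neq0] := eqVneq c 0.
  have /moment_eqs_degenerate[//|//|q0 p0 zy xy rz] : moment_eqs (B + A) B A r q p z y x.
    by rewrite (_ : B + A = C); [exact: moment_eqs_perm13 | move: c0; rewrite /c; lra].
  by rewrite /det_sym3 q0 p0 zy xy rz; ring.
case: eqs => -[e1 e2 e3] [e4 e5 e6].
(* Eliminating p, q, r leaves a symmetric system in (C x, B y, A z) of determinant
   - 4 a b c Q, with Q > 0 by the discriminant inequality. *)
pose Q := (A + B + C) * (2 * (A * B + B * C + C * A) - A ^+ 2 - B ^+ 2 - C ^+ 2)
          + 40 * A * B * C.
have Q_gt0 : 0 < Q.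
  have : 0 < 40 * A * B * C by rewrite !mulr_gt0.
  have : 0 <= (A + B + C) * (2 * (A * B + B * C + C * A) - A ^+ 2 - B ^+ 2 - C ^+ 2).
    by rewrite mulr_ge0 //; lra.
  rewrite /Q; lra.
have [Cx0 By0 Az0] : [/\ C * x = 0, B * y = 0 & A * z = 0].
  apply: (det_sym3_kernel (m11 := c ^+ 2 + 8 * A * B) (m22 := b ^+ 2 + 8 * A * C) (m33 := a ^+ 2 + 8 * B * C)
  (m12 := - (b * c + 4 * A * a)) (m13 := - (a * c + 4 * B * b)) (m23 := - (a * b + 4 * C * c))).
- rewrite [det_sym3 _ _ _ _ _ _](_ : _ = - 4 * (a * b * c) * Q).
    by rewrite !mulf_eq0 oppr_eq0 pnatr_eq0 (negbTE a_neq0) (negbTE b_neq0)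
      (negbTE c_neq0) (gt_eqF Q_gt0).
  by rewrite /det_sym3 /Q /a /b /c; ring.
- move: (congr1 ( *%R (2 * A * B)) e4) (congr1 ( *%R (c * A)) e1).
  move: (congr1 ( *%R (c * B)) e2) (congr1 ( *%R (c * C)) e3); rewrite !mulr0 /a /b /c; lra.
- move: (congr1 ( *%R (2 * A * C)) e5) (congr1 ( *%R (b * A)) e1).
  move: (congr1 ( *%R (b * B)) e2) (congr1 ( *%R (b * C)) e3); rewrite !mulr0 /a /b /c; lra.
- move: (congr1 ( *%R (2 * B * C)) e6) (congr1 ( *%R (a * A)) e1).
  move: (congr1 ( *%R (a * B)) e2) (congr1 ( *%R (a * C)) e3); rewrite !mulr0 /a /b /c; lra.
have [A_neq0 B_neq0 C_neq0] : [/\ A != 0, B != 0 & C != 0] by rewrite !gt_eqF.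
have [x0 y0 z0] : [/\ x = 0, y = 0 & z = 0].
  by split; [apply: (mulfI C_neq0) | apply: (mulfI B_neq0) | apply: (mulfI A_neq0)];
    rewrite mulr0.
have r0 : r = 0.
  apply: (mulfI (_ : 2 * A * B != 0)); first by rewrite !mulf_neq0 ?pnatr_eq0.
  move: (congr1 ( *%R A) e1) (congr1 ( *%R B) e2) (congr1 ( *%R C) e3).
  rewrite x0 y0 z0 !mulr0; lra.
by rewrite /det_sym3 x0 y0 z0 r0; ring.
Qed.

End MomentSystem.

Section Vectors.
Variable R : realType.
Local Notation vec := (R * R * R)%type.

Definition vscale (a : R) (v : vec) : vec := (a * v.1.1, a * v.1.2, a * v.2).

Definition vlin2 (s t : R) (v w : vec) : vec :=
  (s * v.1.1 + t * w.1.1, s * v.1.2 + t * w.1.2, s * v.2 + t * w.2).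

Definition vlin3 (s t u : R) (v1 v2 v3 : vec) : vec :=
  (s * v1.1.1 + t * v2.1.1 + u * v3.1.1, s * v1.1.2 + t * v2.1.2 + u * v3.1.2,
   s * v1.2 + t * v2.2 + u * v3.2).

Definition cross (v w : vec) : vec :=
  (v.1.2 * w.2 - v.2 * w.1.2, v.2 * w.1.1 - v.1.1 * w.2, v.1.1 * w.1.2 - v.1.2 * w.1.1).

Definition dot (v w : vec) : R := v.1.1 * w.1.1 + v.1.2 * w.1.2 + v.2 * w.2.

Definition det3 (u v w : vec) : R := dot (cross u v) w.

Definition indep (v w : vec) : Prop := cross v w <> (0, 0, 0).

Lemma indep_sym v w : indep v w -> indep w v.
Proof.
move=> vw; rewrite /indep /cross => -[e1 e2 e3]; apply: vw.
by rewrite /cross; congr (_, _, _); lra.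
Qed.

Lemma vscale_eq0 a v : vscale a v = (0, 0, 0) -> v <> (0, 0, 0) -> a = 0.
Proof.
case: v => [[v1 v2] v3] [e1 e2 e3] v_neq0; apply/eqP/negPn/negP => a_neq0; apply: v_neq0.
by congr (_, _, _); apply: (mulfI a_neq0); rewrite mulr0.
Qed.

Lemma dot_self_eq0 v : dot v v = 0 -> v = (0, 0, 0).
Proof.
case: v => [[v1 v2] v3]; rewrite /dot /= => e.
have s1 := sqr_ge0 v1; have s2 := sqr_ge0 v2; have s3 := sqr_ge0 v3.
by congr (_, _, _); apply/eqP; rewrite -sqrf_eq0 eq_le sqr_ge0 andbT; lra.
Qed.

Lemma cross_vlin2l a b v w : cross (vlin2 a b v w) w = vscale a (cross v w).
Proof. by rewrite /cross /vscale /=; congr (_, _, _); ring. Qed.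

Lemma cross_vlin2r a b v w : cross v (vlin2 a b v w) = vscale b (cross v w).
Proof. by rewrite /cross /vscale /=; congr (_, _, _); ring. Qed.

Lemma vlin2_eq0 a b v w : indep v w -> vlin2 a b v w = (0, 0, 0) -> a = 0 /\ b = 0.
Proof.
move=> vw e; split; apply: vscale_eq0 vw.
  by rewrite -(cross_vlin2l a b) e /cross /= !(mul0r, subrr).
by rewrite -(cross_vlin2r a) e /cross /= !(mulr0, subrr).
Qed.

Lemma vlin2_neq0 t v w : indep v w -> nonzero3 (vlin2 1 t v w).
Proof. by move=> vw /(vlin2_eq0 vw) [/eqP]; rewrite oner_eq0. Qed.

Lemma proj_eq_vlin2_inj t1 t2 v w x : indep v w ->
  proj_eq (vlin2 1 t1 v w) x -> proj_eq (vlin2 1 t2 v w) x -> t1 = t2.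
Proof.
move=> vw [l1 [l1_neq0 [e1 e2 e3]]] [l2 [_ [f1 f2 f3]]].
have /(vlin2_eq0 vw) [l21 l12] : vlin2 (l2 - l1) (l2 * t1 - l1 * t2) v w = (0, 0, 0).
  rewrite /vlin2; congr (_, _, _).
  - by move: (congr1 ( *%R l2) e1) (congr1 ( *%R l1) f1); lra.
  - by move: (congr1 ( *%R l2) e2) (congr1 ( *%R l1) f2); lra.
  - by move: (congr1 ( *%R l2) e3) (congr1 ( *%R l1) f3); lra.
apply: (mulfI l1_neq0); move: l12; rewrite (_ : l2 = l1); lra.
Qed.

Lemma vscale_dot_self v w :
  vscale (dot w w) v = vlin2 (dot w v) 1 w (cross w (cross v w)).
Proof. by rewrite /vscale /vlin2 /dot /cross /=; congr (_, _, _); ring. Qed.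

Lemma indep_of_not_proj_eq v w : nonzero3 v -> nonzero3 w -> ~ proj_eq v w -> indep v w.
Proof.
move=> v_neq0 w_neq0 not_vw vw; apply: not_vw.
have ww_neq0 : dot w w != 0 by apply/eqP => /dot_self_eq0.
have e : vscale (dot w w) v = vscale (dot w v) w.
  by rewrite vscale_dot_self vw /vlin2 /vscale /cross /=; congr (_, _, _); ring.
exists (dot w v / dot w w); split.
  rewrite mulf_neq0 ?invr_eq0 //; apply/eqP => wv0; move/eqP: ww_neq0; apply.
  by apply: vscale_eq0 v_neq0; rewrite e wv0 /vscale !mul0r.
move: e; rewrite /vscale => -[e1 e2 e3].
case: v e1 e2 e3 {v_neq0 vw} => [[v1 v2] v3] /= e1 e2 e3.
by congr (_, _, _); apply: (mulfI ww_neq0); rewrite ?e1 ?e2 ?e3; field.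
Qed.

Lemma vlin3_cramer v1 v2 v3 v4 : det3 v1 v2 v3 != 0 ->
  v4 = vlin3 (det3 v4 v2 v3 / det3 v1 v2 v3) (det3 v1 v4 v3 / det3 v1 v2 v3)
             (det3 v1 v2 v4 / det3 v1 v2 v3) v1 v2 v3.
Proof.
case: v1 => [[x1 x2] x3]; case: v2 => [[y1 y2] y3]; case: v3 => [[z1 z2] z3].
case: v4 => [[w1 w2] w3]; rewrite /vlin3 /det3 /dot /cross /= => d_neq0.
by congr (_, _, _); field.
Qed.

Lemma det3_eq0_vlin2 x y z : indep x y -> det3 x y z = 0 -> exists a b, z = vlin2 a b x y.
Proof.
move=> xy xyz; have n_neq0 : det3 x y (cross x y) != 0 by apply/eqP => /dot_self_eq0.
rewrite (vlin3_cramer z n_neq0) xyz mul0r; do 2!eexists.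
by rewrite /vlin3 /vlin2 !mul0r !addr0.
Qed.

Lemma det3_vscale a b c v1 v2 v3 :
  det3 (vscale a v1) (vscale b v2) (vscale c v3) = a * b * c * det3 v1 v2 v3.
Proof. by rewrite /det3 /dot /cross /vscale /=; ring. Qed.

End Vectors.

Section Quadrics.
Variable R : realType.
Local Notation vec := (R * R * R)%type.

Definition quad (v : vec) : {poly R} := v.1.1 *: 'X^2 + v.1.2 *: 'X + v.2%:P.

Lemma quad_vscale a v : quad (vscale a v) = a *: quad v.
Proof. by rewrite /quad /= -!mul_polyC !polyCM; ring. Qed.

Lemma quad_vlin2 s t v w : quad (vlin2 s t v w) = s *: quad v + t *: quad w.
Proof. by rewrite /quad /= -!mul_polyC !(polyCD, polyCM); ring. Qed.

Lemma quad_vlin3 s t u v1 v2 v3 :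
  quad (vlin3 s t u v1 v2 v3) = s *: quad v1 + t *: quad v2 + u *: quad v3.
Proof. by rewrite /quad /= -!mul_polyC !(polyCD, polyCM); ring. Qed.

Definition quadric (p1 p2 p3 : {poly R}) (n11 n22 n33 n12 n13 n23 : R) : {poly R} :=
  n11 *: p1 ^+ 2 + n22 *: p2 ^+ 2 + n33 *: p3 ^+ 2
  + 2 *: (n12 *: (p1 * p2) + n13 *: (p1 * p3) + n23 *: (p2 * p3)).

(* X^2 * 1 = X * X is the only relation among the products of X^2, X, 1; writing these
   monomials through quad u1, quad u2, quad u3 with the cofactors cross u_j u_k turns it
   into [quad_relation]. *)
Definition conic_form (v w : vec) : R := 2 * v.1.1 * w.2 + 2 * v.2 * w.1.1 - 4 * v.1.2 * w.1.2.

Lemma quad_relation u1 u2 u3 :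
  let w1 := cross u2 u3 in let w2 := cross u3 u1 in let w3 := cross u1 u2 in
  quadric (quad u1) (quad u2) (quad u3) (conic_form w1 w1) (conic_form w2 w2)
    (conic_form w3 w3) (conic_form w1 w2) (conic_form w1 w3) (conic_form w2 w3) = 0.
Proof.
case: u1 => [[a1 b1] c1]; case: u2 => [[a2 b2] c2]; case: u3 => [[a3 b3] c3].
rewrite /quadric /conic_form /cross /quad /= -!mul_polyC.
by rewrite !(polyCD, polyCM, polyCN, polyCB, polyC_natr); ring.
Qed.

Lemma det_sym3_conic_form u1 u2 u3 :
  let w1 := cross u2 u3 in let w2 := cross u3 u1 in let w3 := cross u1 u2 in
  det_sym3 (conic_form w1 w1) (conic_form w2 w2) (conic_form w3 w3)
    (conic_form w1 w2) (conic_form w1 w3) (conic_form w2 w3) = 16 * det3 u1 u2 u3 ^+ 4.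
Proof.
case: u1 => [[a1 b1] c1]; case: u2 => [[a2 b2] c2]; case: u3 => [[a3 b3] c3].
by rewrite /det_sym3 /conic_form /det3 /dot /cross /=; ring.
Qed.

End Quadrics.

Section Pairing.
Variables (R : realType) (L : 'I_9 -> R).

(* <L, p> for the octic whose coefficient of x^i y^(8-i) is p`_i: the apolarity weights
   between forms of the same degree are 1 on the diagonal and 0 elsewhere ([Fq_pairL]). *)
Definition pairL (p : {poly R}) : R := \sum_(i < 9) L i * p`_i.

Lemma pairLZ c p : pairL (c *: p) = c * pairL p.
Proof. by rewrite /pairL mulr_sumr; apply: eq_bigr => i _; rewrite coefZ mulrCA. Qed.

Lemma pairLD p q : pairL (p + q) = pairL p + pairL q.
Proof. by rewrite /pairL -big_split; apply: eq_bigr => i _; rewrite coefD mulrDr. Qed.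

Lemma pairL0 : pairL 0 = 0.
Proof. by rewrite -(scale0r 0) pairLZ mul0r. Qed.

Lemma Fq_pairL a b c : Fq L a b c = pairL (quad (a, b, c) ^+ 4).
Proof.
rewrite /Fq /apolar /pairL; apply: eq_bigr => i _.
rewrite (bigD1 i) //= big1 ?addr0.
  by rewrite !leqnn divff ?mulr1 // pnatr_eq0 muln_eq0 negb_or -!lt0n !fact_gt0.
move=> j ji; case: ifP => [/andP[ij dij]|]; last by rewrite mulr0.
suff ij_eq : i = j by rewrite ij_eq eqxx in ji.
apply: ord_inj; move: ij dij; have := ltn_ord i; have := ltn_ord j; lia.
Qed.

Lemma pairL_pow4_lin2 s t p q :
  pairL ((s *: p + t *: q) ^+ 4) =
    s ^+ 4 * pairL (p ^+ 4) + 4 * (s ^+ 3 * t * pairL (p ^+ 3 * q))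
  + 6 * (s ^+ 2 * t ^+ 2 * pairL (p ^+ 2 * q ^+ 2))
  + 4 * (s * t ^+ 3 * pairL (q ^+ 3 * p)) + t ^+ 4 * pairL (q ^+ 4).
Proof.
rewrite -!pairLZ -!pairLD; congr pairL.
by rewrite -!mul_polyC !(polyCM, polyC_exp); ring.
Qed.

Variables p1 p2 p3 : {poly R}.

Definition mom (i j k : nat) : R := pairL (p1 ^+ i * p2 ^+ j * p3 ^+ k).

Lemma pairL_pow4_lin3 s t u :
  pairL ((s *: p1 + t *: p2 + u *: p3) ^+ 4) =
    s ^+ 4 * mom 4 0 0 + t ^+ 4 * mom 0 4 0 + u ^+ 4 * mom 0 0 4
  + 4 * (s ^+ 3 * t * mom 3 1 0 + s ^+ 3 * u * mom 3 0 1 + s * t ^+ 3 * mom 1 3 0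
       + t ^+ 3 * u * mom 0 3 1 + s * u ^+ 3 * mom 1 0 3 + t * u ^+ 3 * mom 0 1 3)
  + 6 * (s ^+ 2 * t ^+ 2 * mom 2 2 0 + s ^+ 2 * u ^+ 2 * mom 2 0 2
       + t ^+ 2 * u ^+ 2 * mom 0 2 2)
  + 12 * (s ^+ 2 * t * u * mom 2 1 1 + s * t ^+ 2 * u * mom 1 2 1
        + s * t * u ^+ 2 * mom 1 1 2).
Proof.
rewrite /mom -!pairLZ -!pairLD -!pairLZ -!pairLD; congr pairL.
by rewrite -!mul_polyC !(polyCD, polyCM, polyC_exp); ring.
Qed.

Lemma pairL_cube_sum_mul i j k :
  pairL ((p1 + p2 + p3) ^+ 3 * (p1 ^+ i * p2 ^+ j * p3 ^+ k)) =
    mom i.+3 j k + mom i j.+3 k + mom i j k.+3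
  + 3 * (mom i.+2 j.+1 k + mom i.+2 j k.+1 + mom i.+1 j.+2 k
       + mom i j.+2 k.+1 + mom i.+1 j k.+2 + mom i j.+1 k.+2)
  + 6 * mom i.+1 j.+1 k.+1.
Proof.
rewrite /mom -!pairLZ -!pairLD -!pairLZ -!pairLD; congr pairL.
by rewrite -!mul_polyC !exprS; ring.
Qed.

Lemma pairL_quadric_mul n11 n22 n33 n12 n13 n23 i j k :
  pairL (quadric p1 p2 p3 n11 n22 n33 n12 n13 n23 * (p1 ^+ i * p2 ^+ j * p3 ^+ k)) =
    n11 * mom i.+2 j k + n22 * mom i j.+2 k + n33 * mom i j k.+2
  + 2 * (n12 * mom i.+1 j.+1 k + n13 * mom i.+1 j k.+1 + n23 * mom i j.+1 k.+1).
Proof.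
rewrite /mom -!pairLZ -!pairLD -!pairLZ -!pairLD; congr pairL.
by rewrite /quadric -!mul_polyC !exprS; ring.
Qed.

End Pairing.

Lemma eventually_avoid (R : realDomainType) (T : eqType) (P : R -> T -> Prop) (s : seq T) :
  (forall t1 t2 x, P t1 x -> P t2 x -> t1 = t2) ->
  exists B, forall t, B < t -> forall x, x \in s -> ~ P t x.
Proof.
move=> P_inj; elim: s => [|x s [B IH]]; first by exists 0.
have [[t0 Pt0x]|notP] := classic (exists t0, P t0 x).
  exists (Num.max B t0) => t; rewrite gt_max => /andP[Bt t0t] y.
  rewrite inE => /orP[/eqP-> Ptx|]; last exact: IH.
  by move: t0t; rewrite (P_inj _ _ _ Ptx Pt0x) ltxx.
exists B => t Bt y; rewrite inE => /orP[/eqP-> Ptx|]; last exact: IH.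
by apply: notP; exists t.
Qed.

Section DualCone.
Variables (R : realType) (L : 'I_9 -> R).
Hypothesis L_dual : in_dual_cone L.
Local Notation vec := (R * R * R)%type.
Local Notation pairL := (pairL L).

Lemma real_zeroE v : real_zero L v <-> nonzero3 v /\ pairL (quad v ^+ 4) = 0.
Proof. by case: v => [[a b] c]; rewrite /real_zero Fq_pairL. Qed.

Lemma pairL_quad_pow4_ge0 v : 0 <= pairL (quad v ^+ 4).
Proof. by case: v => [[a b] c]; rewrite -Fq_pairL. Qed.

(* The derivative of F = pairL (quad _ ^+ 4) at v in direction w is 4 <L, q_v^3 q_w>. *)
Definition critical (v : vec) : Prop := forall w, pairL (quad v ^+ 3 * quad w) = 0.

Lemma critical_of_zero v : pairL (quad v ^+ 4) = 0 -> critical v.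
Proof.
move=> v0 w; apply: (mulfI (_ : 4 != 0)); first by rewrite pnatr_eq0.
rewrite mulr0; apply: (nonneg_quartic_lin_coef (c := 6 * pairL (quad v ^+ 2 * quad w ^+ 2))
  (d := 4 * pairL (quad w ^+ 3 * quad v)) (f := pairL (quad w ^+ 4))) => e.
have := pairL_quad_pow4_ge0 (vlin2 1 e v w).
by rewrite quad_vlin2 pairL_pow4_lin2 v0; lra.
Qed.

Lemma critical_vscale a v : critical v -> critical (vscale a v).
Proof. by move=> crit w; rewrite quad_vscale exprZn -scalerAl pairLZ crit mulr0. Qed.

Lemma pairL_pair_zeros s t v w :
  pairL (quad v ^+ 4) = 0 -> pairL (quad w ^+ 4) = 0 ->
  pairL ((s *: quad v + t *: quad w) ^+ 4) =
    6 * (s ^+ 2 * t ^+ 2 * pairL (quad v ^+ 2 * quad w ^+ 2)).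
Proof.
move=> v0 w0; rewrite pairL_pow4_lin2 v0 w0 (critical_of_zero v0) (critical_of_zero w0).
by ring.
Qed.

Section CriticalTriple.
Variables u1 u2 u3 : vec.
Hypotheses (crit1 : critical u1) (crit2 : critical u2) (crit3 : critical u3).
Hypothesis crit_sum : critical (vlin3 1 1 1 u1 u2 u3).
Local Notation m := (mom L (quad u1) (quad u2) (quad u3)).
Local Notation A := (m 0 2 2).
Local Notation B := (m 2 0 2).
Local Notation C := (m 2 2 0).
Hypotheses (A_gt0 : 0 < A) (B_gt0 : 0 < B) (C_gt0 : 0 < C).

Let m400 : m 4 0 0 = 0. Proof. by rewrite /mom !expr0 !mulr1 exprS mulrC crit1. Qed.
Let m040 : m 0 4 0 = 0. Proof. by rewrite /mom !expr0 mul1r mulr1 exprS mulrC crit2. Qed.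
Let m004 : m 0 0 4 = 0. Proof. by rewrite /mom !expr0 !mul1r exprS mulrC crit3. Qed.
Let m310 : m 3 1 0 = 0. Proof. by rewrite /mom expr0 expr1 mulr1 crit1. Qed.
Let m301 : m 3 0 1 = 0. Proof. by rewrite /mom expr0 expr1 mulr1 crit1. Qed.
Let m130 : m 1 3 0 = 0. Proof. by rewrite /mom expr0 expr1 mulr1 mulrC crit2. Qed.
Let m031 : m 0 3 1 = 0. Proof. by rewrite /mom expr0 expr1 mul1r crit2. Qed.
Let m103 : m 1 0 3 = 0. Proof. by rewrite /mom expr0 expr1 mulr1 mulrC crit3. Qed.
Let m013 : m 0 1 3 = 0. Proof. by rewrite /mom expr0 expr1 mul1r mulrC crit3. Qed.
Let mom_cubeE := (m400, m040, m004, m310, m301, m130, m031, m103, m013).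

Lemma mom_mixed :
  [/\ m 2 1 1 = (A - B - C) / 2, m 1 2 1 = (B - A - C) / 2 & m 1 1 2 = (C - A - B) / 2].
Proof.
have sum w : pairL ((quad u1 + quad u2 + quad u3) ^+ 3 * quad w) = 0.
  by have := crit_sum w; rewrite quad_vlin3 !scale1r.
have := pairL_cube_sum_mul L (quad u1) (quad u2) (quad u3) 1 0 0.
have := pairL_cube_sum_mul L (quad u1) (quad u2) (quad u3) 0 1 0.
have := pairL_cube_sum_mul L (quad u1) (quad u2) (quad u3) 0 0 1.
rewrite !expr0 !expr1 !mulr1 !mul1r !sum !mom_cubeE.
by move=> s3 s2 s1; split; lra.
Qed.

Lemma mom_disc_ge0 : 0 <= 2 * (A * B + B * C + C * A) - A ^+ 2 - B ^+ 2 - C ^+ 2.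
Proof.
have [_ _ m112] := mom_mixed.
pose s := - m 1 1 2; pose t := B.
have lead_ge0 : 0 <= 6 * B * (A * B - m 1 1 2 ^+ 2).
  apply: nonneg_quadratic_lead_ge0 (12 * s * t * (s * m 2 1 1 + t * m 1 2 1))
    (6 * s ^+ 2 * t ^+ 2 * C) _ => w.
  have := pairL_quad_pow4_ge0 (vlin3 s t w u1 u2 u3).
  by rewrite quad_vlin3 pairL_pow4_lin3 !mom_cubeE /s /t; lra.
have : 0 <= A * B - m 1 1 2 ^+ 2 by move: lead_ge0; rewrite pmulr_rge0 // mulr_gt0.
by rewrite m112; lra.
Qed.

Lemma conic_form_moment_eqs :
  let w1 := cross u2 u3 in let w2 := cross u3 u1 in let w3 := cross u1 u2 in
  moment_eqs A B C (conic_form w1 w1) (conic_form w2 w2) (conic_form w3 w3)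
    (conic_form w1 w2) (conic_form w1 w3) (conic_form w2 w3).
Proof.
move=> w1 w2 w3; have [m211 m121 m112] := mom_mixed.
have rel i j k := pairL_quadric_mul L (quad u1) (quad u2) (quad u3)
  (conic_form w1 w1) (conic_form w2 w2) (conic_form w3 w3)
  (conic_form w1 w2) (conic_form w1 w3) (conic_form w2 w3) i j k.
move: (rel 2 0 0) (rel 0 2 0) (rel 0 0 2) (rel 1 1 0) (rel 1 0 1) (rel 0 1 1).
rewrite quad_relation !mul0r pairL0 !mom_cubeE m211 m121 m112.
by move=> e1 e2 e3 e4 e5 e6; split; split; lra.
Qed.

Lemma critical_triple_det3_eq0 : det3 u1 u2 u3 = 0.
Proof.
have := moment_eqs_det_sym3 A_gt0 B_gt0 C_gt0 mom_disc_ge0 conic_form_moment_eqs.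
rewrite det_sym3_conic_form => /eqP; rewrite mulf_eq0 pnatr_eq0 expf_eq0 /=.
by move/eqP.
Qed.

End CriticalTriple.

Variable cover : seq vec.
Hypothesis cover_zeros : zeros_covered_by L cover.

Lemma line_not_all_zeros v w :
  indep v w -> ~ (forall t, pairL (quad (vlin2 1 t v w) ^+ 4) = 0).
Proof.
move=> vw all_zero.
have [B avoid] := eventually_avoid cover (fun t t' x => proj_eq_vlin2_inj (x := x) vw).
have [|x x_in] := @cover_zeros (vlin2 1 (B + 1) v w).
  by rewrite real_zeroE; split; [exact: vlin2_neq0 | exact: all_zero].
by apply: avoid; rewrite ?ltrDl ?ltr01.
Qed.

Lemma zeros_mixed_gt0 v w : pairL (quad v ^+ 4) = 0 -> pairL (quad w ^+ 4) = 0 ->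
  indep v w -> 0 < pairL (quad v ^+ 2 * quad w ^+ 2).
Proof.
move=> v0 w0 vw; have := pairL_quad_pow4_ge0 (vlin2 1 1 v w).
rewrite quad_vlin2 pairL_pair_zeros // !expr1n !mul1r pmulr_rge0 ?ltr0n //.
rewrite le_eqVlt => /orP[/eqP mixed0|//]; exfalso; apply: (line_not_all_zeros vw) => t.
by rewrite quad_vlin2 pairL_pair_zeros // -mixed0 !mulr0.
Qed.

Lemma zeros_det3_neq0 x y z :
  pairL (quad x ^+ 4) = 0 -> pairL (quad y ^+ 4) = 0 -> pairL (quad z ^+ 4) = 0 ->
  indep x y -> indep x z -> indep y z -> det3 x y z != 0.
Proof.
move=> x0 y0 z0 xy xz yz; apply/eqP => /(det3_eq0_vlin2 xy) [a [b zab]].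
have a_neq0 : a != 0.
  by apply/eqP => a0; apply: yz; rewrite zab a0 /cross /vlin2 /=; congr (_, _, _); ring.
have b_neq0 : b != 0.
  by apply/eqP => b0; apply: xz; rewrite zab b0 /cross /vlin2 /=; congr (_, _, _); ring.
have := zeros_mixed_gt0 x0 y0 xy; move: z0.
rewrite zab quad_vlin2 pairL_pair_zeros // => /eqP.
by rewrite !mulf_eq0 pnatr_eq0 (negbTE a_neq0) (negbTE b_neq0) /= => /eqP ->; rewrite ltxx.
Qed.

Lemma zeros_scaled_mixed_gt0 a b v w : a != 0 -> b != 0 ->
  pairL (quad v ^+ 4) = 0 -> pairL (quad w ^+ 4) = 0 -> indep v w ->
  0 < pairL (quad (vscale a v) ^+ 2 * quad (vscale b w) ^+ 2).
Proof.
move=> a_neq0 b_neq0 v0 w0 vw; rewrite !quad_vscale !exprZn -scalerAl -scalerAr scalerA.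
by rewrite pairLZ mulr_gt0 ?zeros_mixed_gt0 // mulr_gt0 // exprn_even_gt0.
Qed.

Lemma no_four_zeros v1 v2 v3 v4 :
  real_zero L v1 -> real_zero L v2 -> real_zero L v3 -> real_zero L v4 ->
  ~ proj_eq v2 v1 -> ~ proj_eq v3 v1 -> ~ proj_eq v3 v2 ->
  ~ proj_eq v4 v1 -> ~ proj_eq v4 v2 -> ~ proj_eq v4 v3 -> False.
Proof.
move=> /real_zeroE[nz1 z1] /real_zeroE[nz2 z2] /real_zeroE[nz3 z3] /real_zeroE[nz4 z4].
have indep_of (vi vj : vec) : nonzero3 vi -> nonzero3 vj -> ~ proj_eq vj vi -> indep vi vj.
  by move=> ni nj nji; apply/indep_sym/indep_of_not_proj_eq.
move=> /(indep_of _ _ nz1 nz2) i12 /(indep_of _ _ nz1 nz3) i13 /(indep_of _ _ nz2 nz3) i23.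
move=> /(indep_of _ _ nz1 nz4) i14 /(indep_of _ _ nz2 nz4) i24 /(indep_of _ _ nz3 nz4) i34.
have D_neq0 := zeros_det3_neq0 z1 z2 z3 i12 i13 i23.
pose a := det3 v4 v2 v3 / det3 v1 v2 v3.
pose b := det3 v1 v4 v3 / det3 v1 v2 v3.
pose c := det3 v1 v2 v4 / det3 v1 v2 v3.
have a_neq0 : a != 0 := mulf_neq0
  (zeros_det3_neq0 z4 z2 z3 (indep_sym i24) (indep_sym i34) i23) (invr_neq0 D_neq0).
have b_neq0 : b != 0 := mulf_neq0
  (zeros_det3_neq0 z1 z4 z3 i14 i13 (indep_sym i34)) (invr_neq0 D_neq0).
have c_neq0 : c != 0 := mulf_neq0 (zeros_det3_neq0 z1 z2 z4 i12 i14 i24) (invr_neq0 D_neq0).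
have : det3 (vscale a v1) (vscale b v2) (vscale c v3) != 0.
  by rewrite det3_vscale (mulf_neq0 (mulf_neq0 (mulf_neq0 a_neq0 b_neq0) c_neq0) D_neq0).
apply/negP/negPn/eqP; apply: critical_triple_det3_eq0.
- exact/critical_vscale/critical_of_zero.
- exact/critical_vscale/critical_of_zero.
- exact/critical_vscale/critical_of_zero.
- rewrite (_ : vlin3 _ _ _ _ _ _ = v4); first exact: critical_of_zero.
  by rewrite [RHS](vlin3_cramer v4 D_neq0) /vlin3 /vscale /a /b /c /=; congr (_, _, _); ring.
- by rewrite /mom expr0 mul1r zeros_scaled_mixed_gt0.
- by rewrite /mom expr0 mulr1 zeros_scaled_mixed_gt0.
- by rewrite /mom expr0 mulr1 zeros_scaled_mixed_gt0.
Qed.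

End DualCone.

Lemma cover3_of_no_four (T : eqType) (P : T -> Prop) (E : T -> T -> Prop) :
  (forall v1 v2 v3 v4, P v1 -> P v2 -> P v3 -> P v4 ->
     ~ E v2 v1 -> ~ E v3 v1 -> ~ E v3 v2 -> ~ E v4 v1 -> ~ E v4 v2 -> ~ E v4 v3 -> False) ->
  exists s : seq T, (size s <= 3)%N /\ forall v, P v -> exists2 w, w \in s & E v w.
Proof.
move=> no_four.
have [[v1 P1]|none] := classic (exists v, P v); last first.
  by exists [::]; split=> // v Pv; case: none; exists v.
have [[v2 [P2 n21]]|only1] := classic (exists v, P v /\ ~ E v v1); last first.
  exists [:: v1]; split=> // v Pv; exists v1; rewrite ?inE //.
  by apply: NNPP => n1; apply: only1; exists v.
have [[v3 [P3 n31 n32]]|only2] := classic (exists v, [/\ P v, ~ E v v1 & ~ E v v2]); last first.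
  exists [:: v1; v2]; split=> // v Pv.
  have [E1|n1] := classic (E v v1); first by exists v1; rewrite ?inE ?eqxx.
  exists v2; first by rewrite !inE eqxx orbT.
  by apply: NNPP => n2; apply: only2; exists v.
exists [:: v1; v2; v3]; split=> // v Pv.
have [E1|n1] := classic (E v v1); first by exists v1; rewrite ?inE ?eqxx.
have [E2|n2] := classic (E v v2); first by exists v2; rewrite ?inE ?eqxx ?orbT.
exists v3; first by rewrite !inE eqxx !orbT.
by apply: NNPP => n3; exact: no_four v1 v2 v3 v P1 P2 P3 Pv n21 n31 n32 n1 n2 n3.
Qed.

Theorem mainTheorem12 (R : realType) (L : 'I_9 -> R) :
  in_dual_cone L ->
  (exists s : seq (R * R * R), zeros_covered_by L s) ->
  exists s : seq (R * R * R), (size s <= 3)%N /\ zeros_covered_by L s.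
Proof.
move=> L_dual [cover cover_zeros]; apply: cover3_of_no_four => v1 v2 v3 v4.
exact: (no_four_zeros L_dual cover_zeros).
Qed.
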